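(* Let $m,n$ be positive integers. Then $S_{mn+1}\equiv4(mn+1)S_{mn}\pmod{m^2n^2}$.
   Context: $(S_n)_{n\ge0}$ is the integer sequence defined by $S_0=1$, $S_1=4$ and $(n+1)^2S_{n+1}=4(3n^2+3n+1)S_n-32n^2S_{n-1}$ for $n\ge1$; equivalently $S_n=\sum_{k=0}^n\binom nk\binom{2k}k\binom{2n-2k}{n-k}$. *)

From mathcomp Require Import all_boot.
Set Implicit Arguments. Unset Strict Implicit. Unset Printing Implicit Defensive.

Definition S (n : nat) : nat :=
  \sum_(0 <= k < n.+1) 'C(n, k) * 'C(k.*2, k) * 'C((n - k).*2, n - k).

Lemma S_small : [:: S 0; S 1; S 2; S 3] = [:: 1; 4; 20; 112].
Proof. by rewrite /S !big_nat_recr /= ?big_nil. Qed.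

From mathcomp Require Import all_boot all_algebra.
From mathcomp Require Import zify ring lra.
Import GRing.Theory Num.Theory.

(* The summand F(n,k) of S_n is hypergeometric in both n and k, and creative
   telescoping (Zeilberger) produces a certificate G with
     (n+1)^2 F(n+1,k) - 4(3n^2+3n+1) F(n,k) + 32 n^2 F(n-1,k) = G(n,k+1) - G(n,k),
   so summing over k gives the three-term recurrence of S.  Modulo N^2 that
   recurrence reads (2N+1) S_{N+1} = 4(3N+1) S_N = (2N+1) 4(N+1) S_N, and 2N+1
   is a unit modulo N^2. *)

Definition Sterm n k := 'C(n, k) * 'C(k.*2, k) * 'C((n - k).*2, n - k).

Lemma Sterm_small n k : n < k -> Sterm n k = 0.
Proof. by move=> lt_nk; rewrite /Sterm bin_small // !mul0n. Qed.

Lemma Sterm_diag n : Sterm n n = 'C(n.*2, n).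
Proof. by rewrite /Sterm subnn binn mul1n muln1. Qed.

Lemma mul_bin_center m : 'C(m.+1.*2, m.+1) * m.+1 = 2 * m.*2.+1 * 'C(m.*2, m).
Proof.
have := mul_bin_diag m.+1.*2 m; have := mul_bin_down m.*2.+1 m.
rewrite doubleS /= (_ : m.*2.+1 - m = m.+1); last by lia.
move=> down diag; apply/eqP; rewrite -(eqn_pmul2l (ltn0Sn m)); apply/eqP; nia.
Qed.

Lemma Sterm_recr_n k m :
  m.+1 ^ 2 * Sterm (k + m).+1 k = 2 * (k + m).+1 * m.*2.+1 * Sterm (k + m) k.
Proof.
have e : (k + m).+1 - k = m.+1 by lia.
rewrite /Sterm e (_ : k + m - k = m); last by lia.
have := mul_bin_down (k + m).+1 k; rewrite /= e => down.
have center := mul_bin_center m.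
transitivity ((m.+1 * 'C((k + m).+1, k)) * ('C(m.+1.*2, m.+1) * m.+1) * 'C(k.*2, k)).
  by ring.
by rewrite -down center; ring.
Qed.

Lemma Sterm_recr_k j m :
  m.*2.+1 * j.+1 ^ 2 * Sterm (j.+1 + m) j.+1 = m.+1 ^ 2 * j.*2.+1 * Sterm (j.+1 + m) j.
Proof.
have e : j.+1 + m - j = m.+1 by lia.
rewrite /Sterm e (_ : j.+1 + m - j.+1 = m); last by lia.
have := mul_bin_left (j.+1 + m) j; rewrite e => binS.
have center_m := mul_bin_center m; have center_j := mul_bin_center j.
transitivity ((m.*2.+1 * 'C(m.*2, m)) * (j.+1 * 'C(j.+1 + m, j.+1))
              * ('C(j.+1.*2, j.+1) * j.+1)).
  by ring.
rewrite binS center_j.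
transitivity (m.+1 * j.*2.+1 * 'C(j.+1 + m, j) * 'C(j.*2, j)
              * ('C(m.+1.*2, m.+1) * m.+1)).
  by rewrite center_m; ring.
by ring.
Qed.

Section CreativeTelescoping.

Local Open Scope ring_scope.

Lemma natr_eq_mul_div {R : numFieldType} {a b x y : nat} :
  (a * x = b * y)%N -> (0 < a)%N -> x%:R = b%:R / a%:R * y%:R :> R.
Proof.
move=> /(congr1 (fun z : nat => z%:R : R)); rewrite !natrM => eq_ab a_gt0.
by rewrite mulrAC -eq_ab mulrAC divff ?mul1r // pnatr_eq0 -lt0n.
Qed.

Local Notation F n k := ((Sterm n k)%:R : rat).

Local Ltac solve_neq0 := repeat (apply/andP; split); apply/negP => /eqP; lra.

Lemma F_succ_n k m :
  F (k + m).+1 k = 2 * ((k + m)%:R + 1) * (2 * m%:R + 1) / (m%:R + 1) ^+ 2 * F (k + m) k.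
Proof.
rewrite (natr_eq_mul_div (Sterm_recr_n k m)) // -mul2n.
have m_ge0 := ler0n rat m.
by field; solve_neq0.
Qed.

Lemma F_pred_n k m : (0 < k + m)%N ->
  F (k + m).-1 k = m%:R ^+ 2 / (2 * (k + m)%:R * (2 * m%:R - 1)) * F (k + m) k.
Proof.
case: m => [|m] km_gt0.
  rewrite addn0 in km_gt0 *.
  by rewrite Sterm_small ?ltn_predL // mulr0n expr0n !mul0r.
rewrite addnS /= F_succ_n.
have k_ge0 := ler0n rat k; have m_ge0 := ler0n rat m.
by field; solve_neq0.
Qed.

Lemma F_pred_k j m :
  F (j.+1 + m) j
  = (2 * m%:R + 1) * (j%:R + 1) ^+ 2 / ((m%:R + 1) ^+ 2 * (2 * j%:R + 1))
    * F (j.+1 + m) j.+1.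
Proof.
rewrite (natr_eq_mul_div (esym (Sterm_recr_k j m))) // -!mul2n.
have j_ge0 := ler0n rat j; have m_ge0 := ler0n rat m.
by field; solve_neq0.
Qed.

(* Zeilberger's certificate for [rec_term]; its denominator 2(n-j)-1 is odd,
   hence never zero. *)
Definition wz_cert (n k : nat) : rat :=
  if k is j.+1 then
    - 2 * (2 * j%:R + 1) * (2 * n%:R ^+ 2 - 2 * n%:R * j%:R - n%:R - 1)
      / (2 * n%:R - 2 * j%:R - 1) * F n j
  else 0.

Definition rec_term (n k : nat) : rat :=
  (n%:R + 1) ^+ 2 * F n.+1 k - 4 * (3 * n%:R ^+ 2 + 3 * n%:R + 1) * F n k
  + 32 * n%:R ^+ 2 * F n.-1 k.

Lemma rec_term_wz k m : (0 < k + m)%N ->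
  rec_term (k + m) k = wz_cert (k + m) k.+1 - wz_cert (k + m) k.
Proof.
move=> km_gt0; rewrite /rec_term F_succ_n F_pred_n //.
case: k km_gt0 => [|j] km_gt0.
  rewrite add0n in km_gt0 *; rewrite /wz_cert.
  have m_ge1 : 1 <= m%:R :> rat by rewrite ler1n.
  by field; solve_neq0.
rewrite /wz_cert F_pred_k.
have j_ge0 := ler0n rat j.
have m_cases : (m%:R : rat) = 0 \/ 1 <= (m%:R : rat).
  by case: m {km_gt0} => [|m]; [left | right; rewrite ler1n].
by field; solve_neq0.
Qed.

Lemma rec_term_top n : rec_term n n.+1 = wz_cert n n.+2 - wz_cert n n.+1.
Proof.
rewrite /rec_term /wz_cert (@Sterm_small n) ?(@Sterm_small n.-1) ?ltnS ?leq_pred //.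
rewrite !Sterm_diag.
have := mul_bin_center n; rewrite mulnC => /natr_eq_mul_div -> //.
rewrite -mul2n; have n_ge0 := ler0n rat n.
by field; solve_neq0.
Qed.

Lemma sum_rec_term n : (0 < n)%N -> \sum_(0 <= k < n.+2) rec_term n k = 0.
Proof.
move=> n_gt0; rewrite (eq_big_nat _ _ (F2 := fun k => wz_cert n k.+1 - wz_cert n k)).
  by rewrite telescope_sumr // /wz_cert Sterm_small // mulr0 subr0.
move=> k /andP[_]; rewrite ltnS leq_eqVlt => /orP[/eqP->|]; first exact: rec_term_top.
by rewrite ltnS => le_kn; rewrite -(subnKC le_kn) rec_term_wz // subnKC.
Qed.

Lemma sum_F n l : (n < l)%N -> \sum_(0 <= k < l) F n k = (S n)%:R.
Proof.
move=> lt_nl; rewrite /S natr_sum (big_cat_nat _ (n := n.+1)) //=.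
rewrite [X in _ + X]big1_seq ?addr0 // => k /andP[_].
by rewrite mem_index_iota => /andP[lt_nk _]; rewrite Sterm_small.
Qed.

End CreativeTelescoping.

Lemma S_recurrence n : 0 < n ->
  n.+1 ^ 2 * S n.+1 + 32 * n ^ 2 * S n.-1 = 4 * (3 * n ^ 2 + 3 * n + 1) * S n.
Proof.
move=> n_gt0; have := sum_rec_term n n_gt0.
rewrite /rec_term !big_split /= sumrN -!mulr_sumr.
rewrite !sum_F ?ltnS ?(leq_trans (leq_pred n)) // => rec.
by apply/eqP; rewrite -(eqr_nat rat); apply/eqP; lra.
Qed.

Lemma modn_mulIl d a x y : coprime d a -> a * x = a * y %[mod d] -> x = y %[mod d].
Proof.
move=> co_da; wlog le_yx : x y / y <= x.
  by move=> W; case: (leqP y x) => [/W//|/ltnW/W sym /esym/sym/esym].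
move=> /eqP; rewrite eqn_mod_dvd ?leq_mul2l ?le_yx ?orbT // -mulnBr Gauss_dvdr //.
by move=> dvd_d; apply/eqP; rewrite eqn_mod_dvd.
Qed.

Lemma S_succ_mod n : 0 < n -> S n.+1 = 4 * n.+1 * S n %[mod n ^ 2].
Proof.
move=> n_gt0; apply: (@modn_mulIl _ n.*2.+1).
  by rewrite coprimeXl // -coprime_modr -addn1 -mul2n modnMDl coprime_modr coprimen1.
have := S_recurrence n n_gt0; move: (S n.+1) (S n) (S n.-1) => X Y Z rec.
(* (n+1)^2 = n^2 + (2n+1)  and  3n^2+3n+1 = n^2 + (2n+1)(n+1) *)
have {rec}rec : (X + 32 * Z) * n ^ 2 + n.*2.+1 * X
                = 4 * Y * n ^ 2 + n.*2.+1 * (4 * n.+1 * Y) by nia.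
by have := congr1 (modn^~ (n ^ 2)) rec; rewrite /= !modnMDl.
Qed.

Theorem lemma3p1 (m n : nat) (hm : 0 < m) (hn : 0 < n) :
  S (m * n).+1 = 4 * (m * n).+1 * S (m * n) %[mod (m * n) ^ 2].
Proof. by apply: S_succ_mod; rewrite muln_gt0 hm hn. Qed.
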